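(* In the setting described in the context, let $\mathbf{v}:\mathcal{K}(\mathbb{R}^n)\to\mathbb{R}$ satisfy $\mathbf{v}(X)=\Psi(X)+\mathbf{v}(F(X))$ for all $X\in\mathcal{K}(\mathbb{R}^n)$, be finite on $\mathcal{K}_{\mathcal{D}_{\mathcal{A}}}(\mathbb{R}^n)$, and satisfy $\lim_{k\to\infty}\mathbf{v}(\mathcal{R}(X,k))=0$ for every $X\in\mathcal{K}_{\mathcal{D}_{\mathcal{A}}}(\mathbb{R}^n)$. Then $\mathbf{v}(X)=\mathcal{V}(X)$ for all $X\in\mathcal{K}_{\mathcal{D}_{\mathcal{A}}}(\mathbb{R}^n)$.
   Context: Let $\|\cdot\|$ be a norm on $\mathbb{R}^n$ and $\mathrm{dist}(x,\Omega):=\inf_{y\in\Omega}\|x-y\|$. Let $\mathcal{K}(\mathbb{R}^n)$ denote the nonempty compact subsets of $\mathbb{R}^n$. Consider $x_{k+1}=f(x_k,u_k)$ with $f:\mathbb{R}^n\times\mathbb{R}^m\to\mathbb{R}^n$ continuous and inputs $u_k\in U$, $U\subset\mathbb{R}^m$ nonempty compact. Define $F(X):=\{f(x,u):x\in X,u\in U\}$. For $x\in\mathbb{R}^n$ and $\pi:\mathbb{Z}_+\to U$, $\varphi_x^\pi(0)=x$, $\varphi_x^\pi(k+1)=f(\varphi_x^\pi(k),\pi(k))$; $\mathcal{R}(X,k):=\{\varphi_x^\pi(k):x\in X,\pi\in U^{\mathbb{Z}_+}\}$. Let $\mathcal{A}\in\mathcal{K}(\mathbb{R}^n)$ be controlled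 invariant. Assume local $\ell_p$-stabilizability: there exist $r>0$, $M\ge1$, $p>0$, $\lambda:[0,r]\times\mathbb{Z}_+\to\mathbb{R}_+$ such that (1) for each $k$, $s\mapsto\lambda(s,k)$ is continuous, nondecreasing, $\lambda(0,k)=0$; for each $s$, $k\mapsto\lambda(s,k)$ is nonincreasing, $\lambda(s,0)\le s$; (2) $\sum_{k}\lambda(r,k)^p<\infty$; (3) for every $x$ with $\mathrm{dist}(x,\mathcal{A})\le r$ there is $\pi\in U^{\mathbb{Z}_+}$ with $\mathrm{dist}(\varphi_x^\pi(k),\mathcal{A})\le M\lambda(\mathrm{dist}(x,\mathcal{A}),k)$ for all $k$. Let $\mathcal{D}_{\mathcal{A}}:=\{x:\exists\pi\in U^{\mathbb{Z}_+},\ \lim_{k\to\infty}\mathrm{dist}(\varphi_x^\pi(k),\mathcal{A})=0\}$ and $\mathcal{K}_{\mathcal{D}_{\mathcal{A}}}(\mathbb{R}^n):=\{X\in\mathcal{K}(\mathbb{R}^n):X\cap\mathcal{D}_{\mathcal{A}}\neq\emptyset\}$. Let $\alpha:\mathbb{R}^n\to\mathbb{R}_+$ be continuous with $\underline{\alpha}\,\mathrm{dist}(x,\mathcal{A})^{\bar p}\le\alpha(x)\le\overline{\alpha}\,\mathrm{dist}(x,\mathcal{A})^{\bar p}$, constants $\underline{\alpha},\overline{\alpha}>0$, $\bar p\ge p$. Define $\Psi(X):=\inf_{y\in X}\alpha(y)$ and $\mathcal{V}(X):=\sum_{k=0}^\infty\Psi(\mathcal{R}(X,k))\in[0,\infty]$.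 *)

From HB Require Import structures.
From mathcomp Require Import all_boot all_order all_algebra.
From mathcomp Require Import all_classical all_reals all_analysis.
Set Implicit Arguments. Unset Strict Implicit. Unset Printing Implicit Defensive.
Import Order.TTheory GRing.Theory Num.Theory.
Import numFieldNormedType.Exports.
Local Open Scope classical_set_scope.
Local Open Scope ring_scope.

Section Defs.
Context {R : realType} {n m : nat}.

Definition is_norm (N : 'rV[R]_n -> R) : Prop :=
  (forall x, 0 <= N x) /\ (forall x, N x = 0 -> x = 0) /\
  (forall (a : R) x, N (a *: x) = `|a| * N x) /\
  (forall x y, N (x + y) <= N x + N y).

Definition dist (N : 'rV[R]_n -> R) (Om : set 'rV[R]_n) (x : 'rV[R]_n) : R :=
  inf [set N (x - y) | y in Om].

Definition Kset (X : set 'rV[R]_n) : Prop := compact X /\ X !=set0.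

Definition Fset (f : 'rV[R]_n -> 'rV[R]_m -> 'rV[R]_n) (U : set 'rV[R]_m)
  (X : set 'rV[R]_n) : set 'rV[R]_n :=
  [set z | exists x, X x /\ exists u, U u /\ z = f x u].

Fixpoint traj (f : 'rV[R]_n -> 'rV[R]_m -> 'rV[R]_n) (x : 'rV[R]_n)
  (pi : nat -> 'rV[R]_m) (k : nat) : 'rV[R]_n :=
  match k with
  | 0 => x
  | k'.+1 => f (traj f x pi k') (pi k')
  end.

Definition admissible (U : set 'rV[R]_m) (pi : nat -> 'rV[R]_m) : Prop :=
  forall k, U (pi k).

Definition Reach (f : 'rV[R]_n -> 'rV[R]_m -> 'rV[R]_n) (U : set 'rV[R]_m)
  (X : set 'rV[R]_n) (k : nat) : set 'rV[R]_n :=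
  [set z | exists x, X x /\ exists pi, admissible U pi /\ z = traj f x pi k].

Definition controlled_invariant (f : 'rV[R]_n -> 'rV[R]_m -> 'rV[R]_n)
  (U : set 'rV[R]_m) (A : set 'rV[R]_n) : Prop :=
  forall x, A x -> exists u, U u /\ A (f x u).

Definition DA (N : 'rV[R]_n -> R) (f : 'rV[R]_n -> 'rV[R]_m -> 'rV[R]_n)
  (U : set 'rV[R]_m) (A : set 'rV[R]_n) : set 'rV[R]_n :=
  [set x | exists pi, admissible U pi /\
             (fun k => dist N A (traj f x pi k)) @ \oo --> (0 : R)].

Definition KsetD (N : 'rV[R]_n -> R) (f : 'rV[R]_n -> 'rV[R]_m -> 'rV[R]_n)
  (U : set 'rV[R]_m) (A : set 'rV[R]_n) (X : set 'rV[R]_n) : Prop :=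
  Kset X /\ (X `&` DA N f U A) !=set0.

Definition Psi (alpha : 'rV[R]_n -> R) (X : set 'rV[R]_n) : R :=
  inf [set alpha y | y in X].

Definition Vfun (alpha : 'rV[R]_n -> R) (f : 'rV[R]_n -> 'rV[R]_m -> 'rV[R]_n)
  (U : set 'rV[R]_m) (X : set 'rV[R]_n) : \bar R :=
  (\sum_(0 <= k <oo) (Psi alpha (Reach f U X k))%:E)%E.

End Defs.

From HB Require Import structures.
From mathcomp Require Import all_boot all_order all_algebra.
From mathcomp Require Import all_classical all_reals all_analysis.
Import Order.TTheory GRing.Theory Num.Theory.
Import numFieldNormedType.Exports.
Local Open Scope classical_set_scope.
Local Open Scope ring_scope.

(* Along the reachable sets R(X,k) the Bellman equation reads
   v(R(X,k)) = Psi(R(X,k)) + v(R(X,k+1)), since R(X,k+1) = F(R(X,k)).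
   Hence the partial sums of the series defining V(X) telescope to
   v(X) - v(R(X,K)), which tends to v(X) by the boundary condition. *)

Lemma telescoping_series (R : realType) (a b : nat -> R) :
  (forall k, b k = a k + b k.+1) -> b @ \oo --> 0 ->
  (\sum_(0 <= k <oo) (a k)%:E)%E = (b 0%N)%:E.
Proof.
move=> b_rec b_to0.
have partial_sums K : \sum_(0 <= k < K) a k = b 0%N - b K.
  rewrite (@telescope_sumr_eq _ 0 K (fun k => - b k)) // => [|k _].
    by rewrite opprK addrC.
  by rewrite (b_rec k) opprK addrC addrK.
have sums_to_b0 : (fun K => \sum_(0 <= k < K) a k) @ \oo --> b 0%N.
  rewrite (_ : (fun K => _) = (fun K => b 0%N - b K)); last exact: funext.
  by rewrite -[X in _ --> X]subr0; apply: cvgB => //; exact: cvg_cst.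
rewrite (_ : (fun K => _) = EFin \o (fun K => \sum_(0 <= k < K) a k)).
  by rewrite EFin_lim ?(cvg_lim _ sums_to_b0) //; apply/cvg_ex; exists (b 0%N).
by apply: funext => K; rewrite /= sumEFin.
Qed.

Section Reachable_sets.
Context (R : realType) (n m : nat) (f : 'rV[R]_n -> 'rV[R]_m -> 'rV[R]_n)
  (U : set 'rV[R]_m).

Lemma traj_change_input_after x pi k u j : (k <= j)%N ->
  traj f x (fun i => if i == j then u else pi i) k = traj f x pi k.
Proof.
elim: k => [//|k IHk] k_lt_j /=.
by rewrite IHk ?(ltnW k_lt_j) // (ltn_eqF k_lt_j).
Qed.

Lemma Reach0 X : U !=set0 -> Reach f U X 0 = X.
Proof.
move=> [u0 Uu0]; apply/seteqP; split => z /=.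
  by move=> [x [Xx [pi [_ ->]]]].
by move=> Xz; exists z; split => //; exists (fun=> u0); split.
Qed.

Lemma ReachS X k : Reach f U X k.+1 = Fset f U (Reach f U X k).
Proof.
apply/seteqP; split => z /=.
  move=> [x [Xx [pi [adm_pi ->]]]].
  exists (traj f x pi k); split; first by exists x; split => //; exists pi.
  by exists (pi k).
move=> [_ [[x [Xx [pi [adm_pi ->]]]] [u [Uu ->]]]].
exists x; split => //; exists (fun i => if i == k then u else pi i); split.
  by move=> i; case: (i == k).
by rewrite /= traj_change_input_after // eqxx.
Qed.

Hypotheses (f_cont : continuous (fun z : 'rV[R]_n * 'rV[R]_m => f z.1 z.2))
  (U_compact : compact U) (U_neq0 : U !=set0).

Lemma Fset_image X :
  Fset f U X = [set (fun z : 'rV[R]_n * 'rV[R]_m => f z.1 z.2) z | z in X `*` U].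
Proof.
apply/seteqP; split => z /=.
  by move=> [x [Xx [u [Uu ->]]]]; exists (x, u).
by move=> [[x u] [/= Xx Uu] <-]; exists x; split => //; exists u.
Qed.

Lemma Kset_Fset X : Kset X -> Kset (Fset f U X).
Proof.
case: U_neq0 => u0 Uu0 [X_compact [x0 Xx0]]; split.
  rewrite Fset_image; apply: continuous_compact; last exact: compact_setX.
  exact: continuous_subspaceT.
by exists (f x0 u0); exists x0; split => //; exists u0.
Qed.

Lemma Kset_Reach X k : Kset X -> Kset (Reach f U X k).
Proof.
move=> KX; elim: k => [|k IHk]; first by rewrite Reach0.
by rewrite ReachS; apply: Kset_Fset.
Qed.

End Reachable_sets.

Theorem theorem13 (R : realType) (n m : nat)
  (N : 'rV[R]_n -> R) (f : 'rV[R]_n -> 'rV[R]_m -> 'rV[R]_n)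
  (U : set 'rV[R]_m) (A : set 'rV[R]_n) (alpha : 'rV[R]_n -> R)
  (alpha_lo alpha_hi pbar : R) (v : set 'rV[R]_n -> R) :
  is_norm N ->
  continuous (fun z : 'rV[R]_n * 'rV[R]_m => f z.1 z.2) ->
  compact U -> U !=set0 ->
  Kset A -> controlled_invariant f U A ->
  forall (r M p : R) (lam : R -> nat -> R),
    0 < r -> 1 <= M -> 0 < p ->
    (forall s k, 0 <= s <= r -> 0 <= lam s k) ->
    (forall k, {within `[0, r], continuous (fun s => lam s k)}) ->
    (forall k s t, 0 <= s -> s <= t -> t <= r -> lam s k <= lam t k) ->
    (forall k, lam 0 k = 0) ->
    (forall s k l, 0 <= s <= r -> (k <= l)%N -> lam s l <= lam s k) ->
    (forall s, 0 <= s <= r -> lam s 0 <= s) ->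
    (\sum_(0 <= k <oo) ((lam r k) `^ p)%:E < +oo)%E ->
    (forall x, dist N A x <= r ->
       exists pi, admissible U pi /\
         forall k, dist N A (traj f x pi k) <= M * lam (dist N A x) k) ->
  continuous alpha ->
  0 < alpha_lo -> 0 < alpha_hi -> p <= pbar ->
  (forall x, alpha_lo * (dist N A x) `^ pbar <= alpha x /\
             alpha x <= alpha_hi * (dist N A x) `^ pbar) ->
  (forall X, Kset X -> v X = Psi alpha X + v (Fset f U X)) ->
  (forall X, KsetD N f U A X ->
     (fun k => v (Reach f U X k)) @ \oo --> (0 : R)) ->
  forall X, KsetD N f U A X -> (v X)%:E = Vfun alpha f U X.
Proof.
move=> _ f_cont U_compact U_neq0 _ _ r M p lam _ _ _ _ _ _ _ _ _ _ _ _ _ _ _ _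
  bellman v_Reach_to0 X XD.
have [KX _] := XD.
rewrite /Vfun (@telescoping_series _ (fun k => Psi alpha (Reach f U X k))
  (fun k => v (Reach f U X k))).
- by rewrite Reach0.
- move=> k; rewrite ReachS; apply: bellman.
  exact: Kset_Reach.
- exact: v_Reach_to0.
Qed.
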